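(* Let $q$ be a prime power, $n\ge1$, let $f(x)\in\mathbb{F}_{q^n}[x]$ be a permutation polynomial of $\mathbb{F}_{q^n}$, and let $m_1,\dots,m_n$ be positive integers. For $a_1,\dots,a_n,v_1,\dots,v_n\in\mathbb{F}_{q^n}$, the polynomial $$F(x)=a_1(\mathrm{Tr}(v_1f(x)))^{m_1}+\dots+a_n(\mathrm{Tr}(v_nf(x)))^{m_n}$$ is a permutation polynomial of $\mathbb{F}_{q^n}$ if and only if $\gcd(m_1m_2\cdots m_n,q-1)=1$ and both $\{a_1,\dots,a_n\}$ and $\{v_1,\dots,v_n\}$ are bases of $\mathbb{F}_{q^n}$ over $\mathbb{F}_q$.
   Context: $\mathrm{Tr}(x)=x+x^q+\dots+x^{q^{n-1}}$ is the trace from $\mathbb{F}_{q^n}$ to $\mathbb{F}_q$. A polynomial is a permutation polynomial of a finite field if the map it induces on that field is bijective. *)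

From mathcomp Require Import all_boot all_order all_algebra all_field.
Set Implicit Arguments. Unset Strict Implicit. Unset Printing Implicit Defensive.
Import GRing.Theory.
Local Open Scope ring_scope.

Definition trq (L : finFieldType) (q n : nat) (x : L) : L :=
  \sum_(i < n) x ^+ (q ^ i).

Definition inFq (L : finFieldType) (q : nat) (x : L) : Prop := x ^+ q = x.

Definition is_basis_over_Fq (L : finFieldType) (q n : nat) (a : 'I_n -> L) : Prop :=
  (forall c : 'I_n -> L, (forall i, inFq q (c i)) ->
     \sum_(i < n) c i * a i = 0 -> forall i, c i = 0) /\
  (forall x : L, exists c : 'I_n -> L,
     (forall i, inFq q (c i)) /\ x = \sum_(i < n) c i * a i).

Definition is_perm_poly (L : finFieldType) (f : {poly L}) : Prop :=
  bijective (fun x : L => f.[x]).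

Definition Fpoly (L : finFieldType) (q n : nat) (f : {poly L})
  (a v : 'I_n -> L) (m : 'I_n -> nat) : {poly L} :=
  \sum_(i < n) a i *: (\sum_(j < n) (v i *: f) ^+ (q ^ j)) ^+ m i.

(* Put y = f(x): F is a permutation iff y |-> sum_i a_i Tr(v_i y)^(m_i) is injective
   on L. This map factors through F_q^n as y |-> (Tr(v_i y))_i, then c |-> (c_i^(m_i))_i,
   then c |-> sum_i a_i c_i. As |F_q^n| = |L|, the composite is injective iff all three
   factors are: the first iff v is a basis (the trace form is nondegenerate), the second
   iff every m_i is prime to q - 1, the third iff a is a basis. Here F_q is the set of
   roots of X^q - X, so only |F_q| <= q is free; |F_q| = q follows from the injectivity
   of the first factor, or from a spanning over F_q. *)
From mathcomp Require Import all_boot all_order all_algebra all_field.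
Set Implicit Arguments. Unset Strict Implicit. Unset Printing Implicit Defensive.
Import GRing.Theory.
Local Open Scope ring_scope.

Lemma coprime_prodl_iff (I : finType) (m : I -> nat) r :
  coprime (\prod_i m i) r <-> (forall i, coprime (m i) r).
Proof.
split=> [cop i | cop]; last first.
  by apply: (big_ind (coprime^~ r)) => // [|x y cx cy]; rewrite ?coprime1n ?coprimeMl ?cx.
by move: cop; rewrite (bigD1 i) //= coprimeMl => /andP[].
Qed.

Lemma expr_gcdn_eq1 (R : nzRingType) (x : R) m n :
  (0 < m)%N -> x ^+ m = 1 -> x ^+ n = 1 -> x ^+ gcdn m n = 1.
Proof.
move=> m_gt0 xm xn; have [u w bezout _] := egcdnP n m_gt0.
have := congr1 (GRing.exp x) bezout.
by rewrite exprD mulnC exprM xm expr1n mulnC exprM xn expr1n mul1r.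
Qed.

Lemma inj_imset_card_eq (A B : finType) (D : {set A}) (E : {set B}) (f : A -> B) :
  {in D &, injective f} -> {in D, forall x, f x \in E} -> (#|E| <= #|D|)%N -> f @: D = E.
Proof.
move=> f_inj fDE leED; apply/eqP; rewrite eqEcard card_in_imset // leED andbT.
by apply/subsetP => _ /imsetP[x Dx ->]; apply: fDE.
Qed.

Lemma inj_comp_card (A B C : finType) (D : {set A}) (E : {set B})
    (f : A -> B) (g : B -> C) :
  {in D, forall x, f x \in E} -> (#|E| <= #|D|)%N -> {in D &, injective (g \o f)} ->
  [/\ {in D &, injective f}, f @: D = E & {in E &, injective g}].
Proof.
move=> fDE leED gf_inj.
have f_inj : {in D &, injective f} by move=> x y Dx Dy fxy; apply: gf_inj => //=; rewrite fxy.
have fD := inj_imset_card_eq f_inj fDE leED.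
split=> //; rewrite -fD => _ _ /imsetP[x Dx ->] /imsetP[y Dy ->] gfxy.
by congr (f _); apply: gf_inj.
Qed.

Lemma bij_comp_injP (T : finType) (f g : T -> T) :
  bijective f -> bijective (g \o f) <-> injective g.
Proof.
case=> f' ff' f'f; split=> [/bij_inj gf_inj x y gxy | g_inj].
  by rewrite -(f'f x) -(f'f y); congr f; apply: gf_inj; rewrite /= !f'f.
by apply: injF_bij; apply: inj_comp => //; apply: can_inj ff'.
Qed.

Section FrobeniusFixedPoints.

Variables (L : finFieldType) (q : nat).
Hypotheses (charq : [pchar L].-nat q) (q_gt1 : (1 < q)%N).

Let q_gt0 : (0 < q)%N. Proof. exact: ltnW. Qed.

Definition Fq : {set L} := [set x | x ^+ q == x].

Lemma inFqP x : reflect (inFq q x) (x \in Fq).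
Proof. by rewrite inE; apply: eqP. Qed.

Lemma card_roots_lt (P : {poly L}) (A : {set L}) :
  P != 0 -> {in A, forall x, root P x} -> (#|A| < size P)%N.
Proof.
move=> P_neq0 PA; rewrite cardE; apply: max_poly_roots; rewrite ?enum_uniq //.
by apply/allP => x; rewrite mem_enum; apply: PA.
Qed.

Lemma card_Fq_le : (#|Fq| <= q)%N.
Proof.
have sizeP : size ('X^q - 'X : {poly L}) = q.+1.
  by rewrite size_polyDl size_polyXn // size_polyN size_polyX ltnS.
rewrite -ltnS -sizeP card_roots_lt -?size_poly_eq0 ?sizeP // => x.
by rewrite inE /root !hornerE subr_eq0.
Qed.

Lemma Fq0 : 0 \in Fq.
Proof. by rewrite inE expr0n eqn0Ngt q_gt0. Qed.

Lemma Fq1 : 1 \in Fq.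
Proof. by rewrite inE expr1n. Qed.

Lemma FqB : {in Fq &, forall x y, x - y \in Fq}.
Proof.
by move=> x y /inFqP xq /inFqP yq; rewrite inE exprDn_pchar // exprNn_pchar // xq yq.
Qed.

Lemma FqX m : {in Fq, forall x, x ^+ m \in Fq}.
Proof. by move=> x /inFqP xq; rewrite inE -exprM mulnC exprM xq. Qed.

Lemma Fq_exprXn x j : x \in Fq -> x ^+ (q ^ j) = x.
Proof.
move=> /inFqP xq; elim: j => [|j IHj]; first by rewrite expr1.
by rewrite expnSr exprM IHj.
Qed.

Lemma Fq_expr_inj m : (0 < m)%N -> coprime m (q - 1) ->
  {in Fq &, injective (fun x => x ^+ m)}.
Proof.
move=> m_gt0 /eqP cop x y Fx /inFqP yq /= xy.
have [y0 | y_neq0] := eqVneq y 0.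
  by move: xy; rewrite y0 expr0n eqn0Ngt m_gt0 => /eqP; rewrite expf_eq0 m_gt0 => /eqP.
have /inFqP xq := Fx; pose z := x / y.
have z_m : z ^+ m = 1 by rewrite exprMn exprVn xy divff // expf_neq0.
have z_neq0 : z != 0.
  by apply: contra_eq_neq z_m => ->; rewrite expr0n eqn0Ngt m_gt0 eq_sym oner_neq0.
have z_q1 : z ^+ (q - 1) = 1.
  apply: (mulIf z_neq0).
  by rewrite mul1r -exprSr subn1 prednK // exprMn exprVn xq yq.
have := expr_gcdn_eq1 m_gt0 z_m z_q1; rewrite cop expr1 => z1.
by rewrite -[x](divfK y_neq0) -/z z1 mul1r.
Qed.

Lemma coprime_of_Fq_expr_inj m : #|Fq| = q -> (0 < m)%N ->
  {in Fq &, injective (fun x => x ^+ m)} -> coprime m (q - 1).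
Proof.
(* For g = gcd(m, q - 1), every x in F_q^* has x^((q-1)/g) among the m-th roots of
   unity, so injectivity gives q - 1 roots of X^((q-1)/g) - 1. *)
move=> card_Fq m_gt0 pow_inj; pose g := gcdn m (q - 1); pose s := ((q - 1) %/ g)%N.
have g_gt0 : (0 < g)%N by rewrite gcdn_gt0 m_gt0.
have unit_s : {in Fq :\ 0, forall x, x ^+ s = 1}.
  move=> x /setD1P[x_neq0 Fx]; apply: pow_inj => /=; first exact: FqX.
    by rewrite inE expr1n.
  have x_q1 : x ^+ (q - 1) = 1.
    apply: (mulIf x_neq0); move/inFqP: Fx.
    by rewrite mul1r -exprSr subn1 prednK.
  rewrite -exprM /s divn_mulAC ?dvdn_gcdr // -muln_divA ?dvdn_gcdl //.
  by rewrite exprM x_q1 !expr1n.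
have card_units : #|Fq :\ 0| = (q - 1)%N.
  by have := cardsD1 0 Fq; rewrite Fq0 card_Fq add1n => ->; rewrite subn1.
have s_gt0 : (0 < s)%N by rewrite divn_gt0 // dvdn_leq ?subn_gt0 ?dvdn_gcdr.
have sizeP : size ('X^s - 1 : {poly L}) = s.+1 by rewrite size_XnsubC.
have : (q - 1 < s.+1)%N.
  rewrite -card_units -sizeP card_roots_lt -?size_poly_eq0 ?sizeP // => x /unit_s xs.
  by rewrite /root !hornerE xs subrr.
rewrite ltnS leq_divRL // -[X in (_ <= X)%N]muln1 leq_pmul2l ?subn_gt0 // => g_le1.
by rewrite /coprime eqn_leq g_le1 g_gt0.
Qed.

End FrobeniusFixedPoints.

Section Trace.

Variables (L : finFieldType) (q n : nat).
Hypotheses (charq : [pchar L].-nat q) (q_gt1 : (1 < q)%N).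

Local Notation Tr := (@trq L q n).

Lemma trqD : {morph Tr : x y / x + y}.
Proof.
move=> x y; rewrite /trq -big_split; apply: eq_bigr => i _.
by rewrite exprDn_pchar // pnatX charq.
Qed.

Lemma trq0 : Tr 0 = 0.
Proof. by rewrite /trq big1 // => i _; rewrite expr0n expn_eq0 eqn0Ngt (ltnW q_gt1). Qed.

Lemma trqB x y : Tr (x - y) = Tr x - Tr y.
Proof.
rewrite trqD /trq -sumrN; congr (_ + _); apply: eq_bigr => i _.
by rewrite exprNn_pchar // pnatX charq.
Qed.

Lemma trq_lincomb (I : finType) (c x : I -> L) : (forall i, c i \in Fq L q) ->
  Tr (\sum_i c i * x i) = \sum_i c i * Tr (x i).
Proof.
move=> Fc; rewrite (big_morph Tr trqD trq0); apply: eq_bigr => i _.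
by rewrite /trq mulr_sumr; apply: eq_bigr => j _; rewrite exprMn (Fq_exprXn _ (Fc i)).
Qed.

Hypothesis card_L : #|L| = (q ^ n)%N.

Lemma trq_Fq x : Tr x \in Fq L q.
Proof.
have frobD : {morph (fun y : L => y ^+ q) : y z / y + z} by move=> y z; exact: exprDn_pchar.
have frob0 : (0 : L) ^+ q = 0 by rewrite expr0n eqn0Ngt (ltnW q_gt1).
rewrite inE; apply/eqP; rewrite /trq (big_morph _ frobD frob0).
case: n card_L => [|k] card_Lk; first by rewrite !big_ord0.
rewrite big_ord_recr [RHS]big_ord_recl /= -exprM -expnSr -card_Lk expf_card addrC.
by congr (_ + _); apply: eq_bigr => i _; rewrite -exprM -expnSr.
Qed.

Lemma trq_neq0 : (0 < n)%N -> exists z, Tr z != 0.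
Proof.
move=> n_gt0; pose P : {poly L} := \sum_(i < n) 'X^(q ^ i).
have P_Tr z : P.[z] = Tr z by rewrite horner_sum; apply: eq_bigr => i _; rewrite hornerXn.
have P_neq0 : P != 0.
  apply/eqP => /(congr1 (fun p : {poly L} => p`_1)); rewrite coef_sum coef0.
  rewrite (bigD1 (Ordinal n_gt0)) //= expn0 coefX eqxx big1 ?addr0 => [/eqP|i].
    by rewrite oner_eq0.
  rewrite -val_eqE /= => /negbTE i_neq0.
  by rewrite coefXn -(expn0 q) eqn_exp2l // eq_sym i_neq0.
have size_P : (size P <= (q ^ n.-1).+1)%N.
  apply: leq_trans (size_sum _ _ _) _; apply/bigmax_leqP => i _.
  by rewrite size_polyXn ltnS leq_pexp2l ?(ltnW q_gt1) // -ltnS prednK.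
have [z Tz | Tr0] := pickP (fun z => Tr z != 0); first by exists z.
have all_roots : {in [set: L], forall z, root P z}.
  by move=> z _; rewrite /root P_Tr; apply/negbFE/Tr0.
have := card_roots_lt P_neq0 all_roots; rewrite cardsT card_L.
move=> /leq_trans /(_ size_P); rewrite ltnS leqNgt ltn_exp2l //.
by rewrite ltn_predL n_gt0.
Qed.

End Trace.

Section Coordinates.

Variables (L : finFieldType) (q n : nat).
Hypotheses (charq : [pchar L].-nat q) (q_gt1 : (1 < q)%N) (n_gt0 : (0 < n)%N).
Hypothesis card_L : #|L| = (q ^ n)%N.

Local Notation vec := {ffun 'I_n -> L}.

Definition Fq_vec : {set vec} := [set c | c \in ffun_on (Fq L q)].
Definition lincomb (a : 'I_n -> L) (c : vec) : L := \sum_i c i * a i.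
Definition powm (m : 'I_n -> nat) (c : vec) : vec := [ffun i => c i ^+ m i].
Definition trace_coords (v : 'I_n -> L) (y : L) : vec := [ffun i => trq q n (v i * y)].
Definition delta_vec (i : 'I_n) (x : L) : vec := [ffun j => if j == i then x else 0].

Definition Fq_free (a : 'I_n -> L) := forall c : 'I_n -> L, (forall i, inFq q (c i)) ->
  \sum_i c i * a i = 0 -> forall i, c i = 0.
Definition Fq_spanning (a : 'I_n -> L) := forall x : L, exists c : 'I_n -> L,
  (forall i, inFq q (c i)) /\ x = \sum_i c i * a i.

Lemma Fq_vecP (c : vec) : reflect (forall i, c i \in Fq L q) (c \in Fq_vec).
Proof. by rewrite inE; apply: ffun_onP. Qed.

Lemma card_Fq_vec : #|Fq_vec| = (#|Fq L q| ^ n)%N.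
Proof. by rewrite cardsE card_ffun_on card_ord. Qed.

Lemma card_Fq_vec_le : (#|Fq_vec| <= #|[set: L]|)%N.
Proof. by rewrite card_Fq_vec cardsT card_L leq_exp2r // card_Fq_le. Qed.

Lemma card_Fq_eq : (#|[set: L]| <= #|Fq_vec|)%N -> #|Fq L q| = q.
Proof.
rewrite card_Fq_vec cardsT card_L leq_exp2r // => le_q_Fq.
by apply/eqP; rewrite eqn_leq card_Fq_le.
Qed.

Lemma card_Fq_vec_eq : #|Fq L q| = q -> #|Fq_vec| = #|[set: L]|.
Proof. by rewrite card_Fq_vec cardsT card_L => ->. Qed.

Lemma powm_Fq_vec m (c : vec) : c \in Fq_vec -> powm m c \in Fq_vec.
Proof. by move=> /Fq_vecP Fc; apply/Fq_vecP => i; rewrite ffunE FqX. Qed.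

Lemma trace_coords_Fq_vec v y : trace_coords v y \in Fq_vec.
Proof. by apply/Fq_vecP => i; rewrite ffunE trq_Fq. Qed.

Lemma delta_vec_Fq_vec i x : x \in Fq L q -> delta_vec i x \in Fq_vec.
Proof. by move=> Fx; apply/Fq_vecP => j; rewrite ffunE; case: ifP; rewrite ?Fq0. Qed.

Lemma powm_delta_vec m i x : (forall j, 0 < m j)%N ->
  powm m (delta_vec i x) = delta_vec i (x ^+ m i).
Proof.
move=> m_gt0; apply/ffunP => j; rewrite !ffunE.
by case: eqP => [-> | _]; rewrite ?expr0n ?eqn0Ngt ?m_gt0.
Qed.

Lemma lincomb_injP a : Fq_free a <-> {in Fq_vec &, injective (lincomb a)}.
Proof.
split=> [free c d /Fq_vecP Fc /Fq_vecP Fd cd | inj c Fc c0 i].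
  apply/ffunP => i; apply/eqP; rewrite -subr_eq0; apply/eqP; move: i.
  apply: free => [i|]; first by apply/inFqP/FqB.
  rewrite -[RHS](subrr (lincomb a c)) {2}cd /lincomb -sumrB.
  by apply: eq_bigr => i _; rewrite mulrBl.
have Fc_vec : finfun c \in Fq_vec by apply/Fq_vecP => j; rewrite ffunE; apply/inFqP.
have /(congr1 (fun d : vec => d i)) : finfun c = [ffun=> 0].
  apply: inj => //; first by apply/Fq_vecP => j; rewrite ffunE Fq0.
  rewrite /lincomb [RHS]big1 => [|j _]; last by rewrite ffunE mul0r.
  by rewrite -[RHS]c0; apply: eq_bigr => j _; rewrite ffunE.
by rewrite !ffunE.
Qed.

Lemma Fq_spanningP a : Fq_spanning a <-> lincomb a @: Fq_vec = [set: L].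
Proof.
split=> [span | onto x].
  apply/setP => x; rewrite inE; have [c [Fc ->]] := span x; apply/imsetP.
  exists (finfun c); first by apply/Fq_vecP => i; rewrite ffunE; apply/inFqP.
  by apply: eq_bigr => i _; rewrite ffunE.
have /imsetP[c /Fq_vecP Fc ->] : x \in lincomb a @: Fq_vec by rewrite onto inE.
by exists c; split=> // i; apply/inFqP.
Qed.

Lemma is_basis_lincomb_injP a : #|Fq L q| = q ->
  is_basis_over_Fq q a <-> {in Fq_vec &, injective (lincomb a)}.
Proof.
move=> card_Fq; split=> [[/lincomb_injP // _] | inj].
split; first exact/lincomb_injP.
by apply/Fq_spanningP/inj_imset_card_eq => //; rewrite card_Fq_vec_eq.
Qed.

Lemma trace_coords_inj v : Fq_spanning v -> injective (trace_coords v).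
Proof.
move=> span y y' T_yy'.
have Tr_diff z : trq q n (z * (y - y')) = 0.
  have [c [Fc ->]] := span z.
  rewrite mulr_suml (eq_bigr (fun i => c i * (v i * (y - y')))) => [|i _]; last first.
    by rewrite mulrA.
  rewrite trq_lincomb // => [|i]; last exact/inFqP.
  rewrite big1 // => i _; have := congr1 (fun d : vec => d i) T_yy'.
  by rewrite !ffunE mulrBr trqB // => ->; rewrite subrr mulr0.
apply/eqP; rewrite -subr_eq0; apply/negPn/negP => d_neq0.
have [w] := trq_neq0 q_gt1 card_L n_gt0.
by rewrite -(divfK d_neq0 w) Tr_diff eqxx.
Qed.

Lemma free_of_trace_coords_onto v :
  trace_coords v @: [set: L] = Fq_vec -> Fq_free v.
Proof.
move=> onto c Fc c0 j.
have /imsetP[y _ T_y] : delta_vec j 1 \in trace_coords v @: [set: L].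
  by rewrite onto delta_vec_Fq_vec ?Fq1.
have coord i : trq q n (v i * y) = delta_vec j 1 i by rewrite T_y ffunE.
have := congr1 (fun z => trq q n (z * y)) c0; rewrite /= mul0r trq0 //.
rewrite mulr_suml (eq_bigr (fun i => c i * (v i * y))) => [|i _]; last by rewrite mulrA.
rewrite trq_lincomb // => [|i]; last exact/inFqP.
rewrite (bigD1 j) //= coord ffunE eqxx mulr1 big1 ?addr0 // => i /negbTE ij.
by rewrite coord ffunE ij mulr0.
Qed.

Lemma is_basis_trace_coords_injP v : #|Fq L q| = q ->
  is_basis_over_Fq q v <-> injective (trace_coords v).
Proof.
move=> card_Fq; split=> [[_ /trace_coords_inj] // | inj].
apply/(is_basis_lincomb_injP _ card_Fq)/lincomb_injP/free_of_trace_coords_onto.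
apply: inj_imset_card_eq => [y y' _ _ | y _|]; [exact: inj | exact: trace_coords_Fq_vec |].
by rewrite card_Fq_vec_eq.
Qed.

Lemma powm_injP m : #|Fq L q| = q -> (forall i, 0 < m i)%N ->
  {in Fq_vec &, injective (powm m)} <-> (forall i, coprime (m i) (q - 1)).
Proof.
move=> card_Fq m_gt0; split=> [inj i | cop c d /Fq_vecP Fc /Fq_vecP Fd cd].
  apply: (coprime_of_Fq_expr_inj q_gt1 card_Fq (m_gt0 i)) => x y Fx Fy /= xy.
  have := inj _ _ (delta_vec_Fq_vec i Fx) (delta_vec_Fq_vec i Fy).
  rewrite !powm_delta_vec // xy => /(_ erefl) /(congr1 (fun d : vec => d i)).
  by rewrite !ffunE eqxx.
apply/ffunP => i; apply: (Fq_expr_inj q_gt1 (m_gt0 i) (cop i) (Fc i) (Fd i)).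
by have := congr1 (fun d : vec => d i) cd; rewrite !ffunE.
Qed.

Definition trace_power_sum (a v : 'I_n -> L) (m : 'I_n -> nat) (y : L) : L :=
  lincomb a (powm m (trace_coords v y)).

Lemma trace_power_sum_injP a v m : (forall i, 0 < m i)%N ->
  injective (trace_power_sum a v m) <->
  [/\ coprime (\prod_i m i) (q - 1), is_basis_over_Fq q a & is_basis_over_Fq q v].
Proof.
move=> m_gt0; split=> [F_inj | [/coprime_prodl_iff cop basis_a basis_v]].
  have [T_inj T_onto PC_inj] := inj_comp_card (fun y _ => trace_coords_Fq_vec v y)
    card_Fq_vec_le (g := lincomb a \o powm m) (in2W F_inj).
  have card_Fq : #|Fq L q| = q.
    by apply: card_Fq_eq; rewrite -(card_in_imset T_inj) T_onto.
  have [P_inj _ C_inj] := inj_comp_card (powm_Fq_vec m) (leqnn _) PC_inj.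
  split; [exact/coprime_prodl_iff/powm_injP | exact/is_basis_lincomb_injP |].
  by apply/is_basis_trace_coords_injP => // y y'; apply: T_inj; rewrite inE.
have card_Fq : #|Fq L q| = q.
  apply: card_Fq_eq; rewrite -((Fq_spanningP a).1 basis_a.2).
  by apply: leq_imset_card.
have C_inj := (is_basis_lincomb_injP _ card_Fq).1 basis_a.
have P_inj := (powm_injP card_Fq m_gt0).2 cop.
have T_inj := (is_basis_trace_coords_injP _ card_Fq).1 basis_v.
move=> y y' /C_inj F_yy'; apply/T_inj/P_inj; rewrite ?trace_coords_Fq_vec //.
by apply: F_yy'; rewrite powm_Fq_vec ?trace_coords_Fq_vec.
Qed.

End Coordinates.

Theorem mainTheorem8 (L : finFieldType) (p k q n : nat)
  (hp : prime p) (hk : (0 < k)%N) (hq : q = (p ^ k)%N) (hn : (0 < n)%N)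
  (hL : #|L| = (q ^ n)%N)
  (f : {poly L}) (hf : is_perm_poly f)
  (m : 'I_n -> nat) (hm : forall i, (0 < m i)%N)
  (a v : 'I_n -> L) :
  is_perm_poly (Fpoly q f a v m) <->
  [/\ coprime (\prod_(i < n) m i) (q - 1),
      is_basis_over_Fq q a & is_basis_over_Fq q v].
Proof.
have charp : p \in [pchar L] by apply: (card_finPcharP (n := k * n)); rewrite // hL hq expnM.
have charq : [pchar L].-nat q by rewrite hq pnatX (pnatE _ hp) charp.
have q_gt1 : (1 < q)%N by rewrite hq -(exp1n k) ltn_exp2r // prime_gt1.
have evalF x : (Fpoly q f a v m).[x] = trace_power_sum q a v m f.[x].
  rewrite /Fpoly horner_sum; apply: eq_bigr => i _.
  rewrite hornerZ horner_exp horner_sum !ffunE mulrC /trq; congr (_ ^+ _ * _).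
  by apply: eq_bigr => j _; rewrite horner_exp hornerZ.
apply: iff_trans (trace_power_sum_injP charq q_gt1 hn hL a v hm).
apply: iff_trans (bij_comp_injP _ hf).
by split=> /eq_bij; apply=> x; rewrite /= evalF.
Qed.
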